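(* Let $\mu$ be a distribution over $\{0,1\}^V$ and $\theta\in(0,1)$. Let $(X^{(t)}_{\pi\text{-GD}})_{t\ge0}$ be the Glauber dynamics on $\pi$ started from $X^{(0)}_{\pi\text{-GD}}=\mathsf{lift}(\mathbf 1_V)$ and $(X^{(t)}_{\mu\text{-GD}})_{t\ge0}$ the Glauber dynamics on $\mu$ started from $\mathbf 1_V$. Then for every integer $t\ge0$, $X^{(t)}_{\pi\text{-GD}}$ and $\mathsf{lift}(X^{(t)}_{\mu\text{-GD}})$ are identically distributed, and $\mathsf{contr}(X^{(t)}_{\pi\text{-GD}})$ and $X^{(t)}_{\mu\text{-GD}}$ are identically distributed.
   Context: $\mathsf{lift}:\{0,1\}^V\to\{0,1,\star\}^V$ is random: independently per coordinate, $0\mapsto0$, $1\mapsto\star$ w.p. $1-\theta$, $1\mapsto1$ w.p. $\theta$ (applied with fresh independent randomness). $\mathsf{contr}$: $0\mapsto0$, $1,\star\mapsto1$ coordinatewise. $\pi$ is the law of $\mathsf{lift}(X)$ for $X\sim\mu$. Glauber dynamics on a distribution $\nu$: pick $v\in V$ uniformly and resample coordinate $v$ from $\nu$ conditioned on the other coordinates. *)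

From HB Require Import structures.
From mathcomp Require Import all_boot all_order all_algebra.
Set Implicit Arguments. Unset Strict Implicit. Unset Printing Implicit Defensive.
Import Order.TTheory GRing.Theory Num.Theory.
Local Open Scope ring_scope.

Inductive spin := S0 | S1 | Sstar.

Definition spin_to (s : spin) : 'I_3 :=
  match s with S0 => inord 0 | S1 => inord 1 | Sstar => inord 2 end.
Definition spin_of (i : 'I_3) : spin :=
  match val i with 0%N => S0 | 1%N => S1 | _ => Sstar end.
Lemma spin_toK : cancel spin_to spin_of.
Proof. by case; rewrite /spin_of /= inordK. Qed.

HB.instance Definition _ := Equality.copy spin (can_type spin_toK).
HB.instance Definition _ := Choice.copy spin (can_type spin_toK).
HB.instance Definition _ := Countable.copy spin (can_type spin_toK).
HB.instance Definition _ := Finite.copy spin (can_type spin_toK).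

Definition contr1 (s : spin) : bool := if s is S0 then false else true.
Definition contr (V : finType) (y : {ffun V -> spin}) : {ffun V -> bool} :=
  [ffun v => contr1 (y v)].

Section Defs.
Variable R : realFieldType.

(* probability that a single coordinate b is lifted to s *)
Definition lift1 (theta : R) (b : bool) (s : spin) : R :=
  match b, s with
  | false, S0 => 1
  | false, _ => 0
  | true, S0 => 0
  | true, S1 => theta
  | true, Sstar => 1 - theta
  end.

Definition lift_law (V : finType) (theta : R) (x : {ffun V -> bool})
  (y : {ffun V -> spin}) : R := \prod_(v : V) lift1 theta (x v) (y v).

(* pi = law of lift(X), X ~ mu *)
Definition lift_dist (V : finType) (theta : R) (mu : {ffun V -> bool} -> R)
  (y : {ffun V -> spin}) : R := \sum_(x : {ffun V -> bool}) mu x * lift_law theta x y.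

Definition contr_dist (V : finType) (p : {ffun V -> spin} -> R)
  (x : {ffun V -> bool}) : R := \sum_(y | contr y == x) p y.

Definition is_dist (T : finType) (p : T -> R) : Prop :=
  (forall x, 0 <= p x) /\ \sum_(x : T) p x = 1.

Definition upd (V : finType) (S : Type) (x : {ffun V -> S}) (v : V) (s : S) :
  {ffun V -> S} := [ffun u => if u == v then s else x u].

(* Convention:
   if the conditioning event has nu-mass 0, the chain stays put. *)
Definition glauberK (V S : finType) (nu : {ffun V -> S} -> R)
  (x y : {ffun V -> S}) : R :=
  #|V|%:R^-1 * \sum_(v : V)
    (if [forall u, (u != v) ==> (x u == y u)] then
       let Z := \sum_(s : S) nu (upd x v s) in
       (if Z == 0 then (y == x)%:R else nu y / Z)
     else 0).

Fixpoint mc_law (T : finType) (init : T -> R) (K : T -> T -> R) (t : nat) : T -> R :=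
  match t with
  | 0%N => init
  | t'.+1 => fun y => \sum_(x : T) mc_law init K t' x * K x y
  end.

Definition point_mass (T : finType) (a : T) : T -> R := fun x => (x == a)%:R.

End Defs.

From HB Require Import structures.
From mathcomp Require Import all_boot all_order all_algebra.
From mathcomp Require Import ring.
Set Implicit Arguments. Unset Strict Implicit. Unset Printing Implicit Defensive.
Import Order.TTheory GRing.Theory Num.Theory.
Local Open Scope ring_scope.

(** Lifting is the Markov kernel [Λ(x, y) = ∏_v lift1(x_v, y_v)] from [{0,1}^V] to
    [{0,1,⋆}^V], so [π = μΛ]; [Λ(x, y) ≠ 0] forces [x = contr y], hence
    [π(y) = μ(contr y) Λ(contr y, y)].  Conditioning [π] on the coordinates off [v]
    therefore cancels the factors of [Λ] off [v]: resampling [y_v] from [π] is the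
    same as resampling the bit [x_v] from [μ] and lifting it again.  This is the
    intertwining [Λ P_π = P_μ Λ] of the Glauber kernels, which iterates to
    [law_π(t) = law_μ(t) Λ]; the second claim follows because [contr] undoes [Λ]. *)

Section Intertwining.
Variables (R : realFieldType) (S T : finType).

Definition push (p : S -> R) (M : S -> T -> R) (y : T) : R := \sum_x p x * M x y.

Lemma push_point_mass (a : S) (M : S -> T -> R) : push (point_mass R a) M =1 M a.
Proof.
move=> y; rewrite /push (bigD1 a) //= /point_mass eqxx mul1r big1 ?addr0 //.
by move=> x /negbTE ->; rewrite mul0r.
Qed.

Variables (K : S -> S -> R) (K' : T -> T -> R) (M : S -> T -> R).
Hypothesis intertwined : forall x z, \sum_y M x y * K' y z = \sum_x' K x x' * M x' z.

Lemma mc_law_push (init : S -> R) (init' : T -> R) :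
  init' =1 push init M -> forall t, mc_law init' K' t =1 push (mc_law init K t) M.
Proof.
move=> init'E; elim=> [|t IH] z //=; set m := mc_law init K t.
transitivity (\sum_x m x * \sum_x' K x x' * M x' z).
  under eq_bigr do rewrite IH /push mulr_suml.
  rewrite exchange_big; apply: eq_bigr => x _.
  by rewrite -intertwined mulr_sumr; apply: eq_bigr => y _; rewrite mulrA.
rewrite /push; under [RHS]eq_bigr do rewrite mulr_suml.
rewrite [RHS]exchange_big; apply: eq_bigr => x _.
by rewrite mulr_sumr; apply: eq_bigr => x' _; rewrite mulrA.
Qed.

End Intertwining.

Section Glauber.
Variables (R : realFieldType) (V S : finType).
Implicit Types (x y z : {ffun V -> S}) (nu : {ffun V -> S} -> R) (v : V) (s : S).

Lemma updE x v s : upd x v s v = s.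
Proof. by rewrite ffunE eqxx. Qed.

Lemma upd_id x v : upd x v (x v) = x.
Proof. by apply/ffunP=> u; rewrite ffunE; case: eqP => // ->. Qed.

Lemma upd_upd x v s s' : upd (upd x v s) v s' = upd x v s'.
Proof. by apply/ffunP=> u; rewrite !ffunE; case: eqP. Qed.

Lemma upd_eq x v s : (upd x v s == x) = (s == x v).
Proof. by apply/eqP/eqP => [<-|->]; [rewrite updE | exact: upd_id]. Qed.

Definition agree_off v x y := [forall u, (u != v) ==> (x u == y u)].

Lemma agree_off_sym v x y : agree_off v x y = agree_off v y x.
Proof. by apply: eq_forallb => u; rewrite [x u == _]eq_sym. Qed.

Lemma agree_off_upd x v s : agree_off v x (upd x v s).
Proof. by apply/forallP => u; apply/implyP; rewrite ffunE => /negbTE ->. Qed.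

Lemma agree_off_updE x y v : agree_off v x y -> upd x v (y v) = y.
Proof.
move/forallP=> xy; apply/ffunP => u; rewrite ffunE.
by case: (eqVneq u v) => [-> // | uv]; apply/eqP; exact: (implyP (xy u) uv).
Qed.

Lemma sum_agree_off v x (F : {ffun V -> S} -> R) :
  \sum_(y | agree_off v x y) F y = \sum_s F (upd x v s).
Proof.
rewrite (reindex_onto (upd x v) (fun y => y v)) => [|y /agree_off_updE //].
by apply: eq_bigl => s; rewrite agree_off_upd updE eqxx.
Qed.

Definition site_mass nu v x := \sum_s nu (upd x v s).

Lemma site_mass_upd nu v x s : site_mass nu v (upd x v s) = site_mass nu v x.
Proof. by apply: eq_bigr => s' _; rewrite upd_upd. Qed.

Definition glauber_site nu v x y :=
  if agree_off v x y then
    (if site_mass nu v x == 0 then (y == x)%:R else nu y / site_mass nu v x)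
  else 0.

Lemma glauberKE nu x y : glauberK nu x y = #|V|%:R^-1 * \sum_v glauber_site nu v x y.
Proof. by []. Qed.

Lemma glauber_site_upd nu v x s :
  glauber_site nu v x (upd x v s) =
  if site_mass nu v x == 0 then (s == x v)%:R else nu (upd x v s) / site_mass nu v x.
Proof. by rewrite /glauber_site agree_off_upd upd_eq. Qed.

Lemma glauber_site_updl nu v z s :
  glauber_site nu v (upd z v s) z =
  if site_mass nu v z == 0 then (s == z v)%:R else nu z / site_mass nu v z.
Proof.
by rewrite /glauber_site agree_off_sym agree_off_upd site_mass_upd [z == _]eq_sym upd_eq.
Qed.

Lemma sum_glauber_site_r nu v x (g : {ffun V -> S} -> R) :
  \sum_y glauber_site nu v x y * g y =
  if site_mass nu v x == 0 then g x
  else \sum_s nu (upd x v s) * g (upd x v s) / site_mass nu v x.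
Proof.
rewrite (bigID (agree_off v x)) /= [X in _ + X]big1 ?addr0; last first.
  by move=> y /negbTE; rewrite /glauber_site => ->; rewrite mul0r.
rewrite sum_agree_off /=; under eq_bigr => s _ do rewrite glauber_site_upd.
case: eqP => _; last by apply: eq_bigr => s _; rewrite mulrAC.
rewrite (bigD1 (x v)) //= eqxx mul1r upd_id big1 ?addr0 // => s /negbTE ->.
by rewrite mul0r.
Qed.

Lemma sum_glauber_site_l nu v z (g : {ffun V -> S} -> R) :
  \sum_y g y * glauber_site nu v y z =
  if site_mass nu v z == 0 then g z
  else (\sum_s g (upd z v s)) * nu z / site_mass nu v z.
Proof.
rewrite (bigID (agree_off v z)) /= [X in _ + X]big1 ?addr0; last first.
  by move=> y; rewrite agree_off_sym /glauber_site => /negbTE ->; rewrite mulr0.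
rewrite sum_agree_off /=; under eq_bigr => s _ do rewrite glauber_site_updl.
case: eqP => _; last by rewrite -mulrA mulr_suml.
rewrite (bigD1 (z v)) //= eqxx mulr1 upd_id big1 ?addr0 // => s /negbTE ->.
by rewrite mulr0.
Qed.

End Glauber.

Section ProductKernel.
Variables (R : realFieldType) (V A B : finType) (f : B -> A) (l : A -> B -> R).
Hypothesis l_sum1 : forall a, \sum_b l a b = 1.
Hypothesis l_fiber : forall a b, l a b != 0 -> a = f b.
Implicit Types (x : {ffun V -> A}) (y z : {ffun V -> B}) (v : V).

Definition prod_kernel x y : R := \prod_v l (x v) (y v).
Definition prod_kernel_off v x y : R := \prod_(u | u != v) l (x u) (y u).
Definition map_conf y : {ffun V -> A} := [ffun v => f (y v)].
Local Notation L := prod_kernel.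

Lemma l_eq0 a b : a != f b -> l a b = 0.
Proof. by apply: contraNeq => /l_fiber ->. Qed.

Lemma l_fiber_sum1 a : \sum_(b | f b == a) l a b = 1.
Proof.
rewrite -(l_sum1 a) [RHS](bigID (fun b => f b == a)) /= [X in _ + X]big1 ?addr0 //.
by move=> b; rewrite eq_sym => /l_eq0.
Qed.

Lemma prod_kernel_sum1 x : \sum_y L x y = 1.
Proof.
rewrite /L -(bigA_distr_bigA (fun v b => l (x v) b)) /=.
by apply: big1 => v _; exact: l_sum1.
Qed.

Lemma prod_kernel_eq0 x y : map_conf y != x -> L x y = 0.
Proof.
apply: contraNeq => /prodf_neq0 Lxy_neq0; apply/eqP/ffunP => v.
by rewrite ffunE -(l_fiber (Lxy_neq0 v isT)).
Qed.

Lemma prod_kernel_fiber_sum1 x : \sum_(y | map_conf y == x) L x y = 1.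
Proof.
rewrite -(prod_kernel_sum1 x) [RHS](bigID (fun y => map_conf y == x)) /=.
by rewrite [X in _ + X]big1 ?addr0 // => y /prod_kernel_eq0.
Qed.

Lemma push_prod_kernel (mu : {ffun V -> A} -> R) y :
  push mu L y = mu (map_conf y) * L (map_conf y) y.
Proof.
rewrite /push (bigD1 (map_conf y)) //= big1 ?addr0 // => x x_neq.
by rewrite prod_kernel_eq0 ?mulr0 // eq_sym.
Qed.

Lemma push_prod_kernelK (p : {ffun V -> A} -> R) x :
  \sum_(y | map_conf y == x) push p L y = p x.
Proof.
under eq_bigr => y /eqP yx do rewrite push_prod_kernel yx.
by rewrite -mulr_sumr prod_kernel_fiber_sum1 mulr1.
Qed.

Lemma map_conf_upd y v b : map_conf (upd y v b) = upd (map_conf y) v (f b).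
Proof. by apply/ffunP=> u; rewrite !ffunE; case: eqP. Qed.

Lemma prod_kernel_split v x y : L x y = prod_kernel_off v x y * l (x v) (y v).
Proof. by rewrite /L (bigD1 v) //= mulrC. Qed.

Lemma prod_kernel_off_updl v x y a : prod_kernel_off v (upd x v a) y = prod_kernel_off v x y.
Proof. by apply: eq_bigr => u /negbTE uv; rewrite ffunE uv. Qed.

Lemma prod_kernel_off_updr v x y b : prod_kernel_off v x (upd y v b) = prod_kernel_off v x y.
Proof. by apply: eq_bigr => u /negbTE uv; rewrite ffunE uv. Qed.

Lemma prod_kernel_off_neq0_upd v x z :
  prod_kernel_off v x z != 0 -> forall a, upd x v a = upd (map_conf z) v a.
Proof.
move=> /prodf_neq0 off_neq0 a; apply/ffunP => u; rewrite !ffunE.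
by case: eqP => // /eqP uv; rewrite -(l_fiber (off_neq0 u uv)).
Qed.

Lemma site_mass_push (mu : {ffun V -> A} -> R) v z :
  site_mass (push mu L) v z =
  prod_kernel_off v (map_conf z) z * site_mass mu v (map_conf z).
Proof.
set c := map_conf z; set W := prod_kernel_off v c z.
transitivity (\sum_s mu (upd c v (f s)) * (W * l (f s) s)).
  apply: eq_bigr => s _; rewrite push_prod_kernel map_conf_upd (prod_kernel_split v).
  by rewrite prod_kernel_off_updl prod_kernel_off_updr !updE.
rewrite (partition_big f predT) //= mulr_sumr; apply: eq_bigr => a _.
transitivity (\sum_(s | f s == a) mu (upd c v a) * (W * l a s)).
  by apply: eq_bigr => s /eqP <-.
by rewrite -!mulr_sumr l_fiber_sum1 mulr1 mulrC.
Qed.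

Lemma glauber_site_intertwined (mu : {ffun V -> A} -> R) v x z :
  \sum_y L x y * glauber_site (push mu L) v y z =
  \sum_x' glauber_site mu v x x' * L x' z.
Proof.
rewrite sum_glauber_site_l sum_glauber_site_r.
set W := prod_kernel_off v x z.
have Lx_updz s : L x (upd z v s) = W * l (x v) s.
  by rewrite (prod_kernel_split v) prod_kernel_off_updr updE.
have Lupdx_z a : L (upd x v a) z = W * l a (z v).
  by rewrite (prod_kernel_split v) prod_kernel_off_updl updE.
have [W0 | W_neq0] := eqVneq W 0.
  rewrite (prod_kernel_split v) -/W W0 mul0r big1 => [|s _]; last by rewrite Lx_updz W0 mul0r.
  rewrite big1 => [|a _]; last by rewrite Lupdx_z W0 mul0r mulr0 mul0r.
  by rewrite !mul0r; do 2 case: ifP.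
set c := map_conf z.
have xc := prod_kernel_off_neq0_upd W_neq0.
have Wc : prod_kernel_off v c z = W.
  by rewrite /W -[in RHS](upd_id x v) xc prod_kernel_off_updl.
have -> : site_mass mu v x = site_mass mu v c by apply: eq_bigr => a _; rewrite xc.
rewrite site_mass_push -/c Wc mulf_eq0 (negbTE W_neq0) /=.
case: eqP => // /eqP Zm_neq0.
rewrite (eq_bigr _ (fun s _ => Lx_updz s)) -mulr_sumr l_sum1 mulr1.
rewrite push_prod_kernel -/c (prod_kernel_split v) Wc.
rewrite (bigD1 (c v)) //= big1 ?addr0 => [|a a_neq]; last first.
  by rewrite ffunE in a_neq; rewrite Lupdx_z l_eq0 ?mulr0 ?mul0r.
rewrite Lupdx_z xc upd_id.
by field; rewrite W_neq0 Zm_neq0.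
Qed.

Lemma glauberK_intertwined (mu : {ffun V -> A} -> R) x z :
  \sum_y L x y * glauberK (push mu L) y z = \sum_x' glauberK mu x x' * L x' z.
Proof.
transitivity (#|V|%:R^-1 * \sum_v \sum_y L x y * glauber_site (push mu L) v y z).
  rewrite exchange_big mulr_sumr; apply: eq_bigr => y _.
  by rewrite glauberKE mulrCA mulr_sumr.
under eq_bigr do rewrite glauber_site_intertwined.
rewrite exchange_big mulr_sumr; apply: eq_bigr => x' _.
by rewrite glauberKE -mulrA mulr_suml.
Qed.

End ProductKernel.

Lemma spin_ofK : cancel spin_of spin_to.
Proof. by case=> [[|[|[|k]]] lt_k3] //; apply/val_inj; rewrite /= inordK. Qed.

Lemma sum_spin (M : nmodType) (F : spin -> M) : \sum_s F s = F S0 + F S1 + F Sstar.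
Proof.
rewrite (reindex spin_of); last by exists spin_to => s _; [exact: spin_ofK | exact: spin_toK].
by rewrite !big_ord_recl big_ord0 /= addr0 addrA.
Qed.

Lemma lift1_sum1 (R : realFieldType) (theta : R) b : \sum_s lift1 theta b s = 1.
Proof. by rewrite sum_spin; case: b; rewrite /= ?add0r ?addr0 // addrC subrK. Qed.

Lemma lift1_fiber (R : realFieldType) (theta : R) b s : lift1 theta b s != 0 -> b = contr1 s.
Proof. by case: b; case: s; rewrite //= eqxx. Qed.

Theorem lemma4p1 (R : realFieldType) (V : finType)
  (mu : {ffun V -> bool} -> R) (theta : R)
  (Hmu : is_dist mu) (Htheta0 : 0 < theta) (Htheta1 : theta < 1) :
  let pi := lift_dist theta mu in
  let one := [ffun _ : V => true] in
  let lawPi := mc_law (lift_law theta one) (glauberK pi) in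
  let lawMu := mc_law (@point_mass R _ one) (glauberK mu) in
  forall t : nat,
    lawPi t =1 lift_dist theta (lawMu t) /\
    contr_dist (lawPi t) =1 lawMu t.
Proof.
move=> pi one lawPi lawMu.
have lift_sum1 := @lift1_sum1 R theta.
have lift_fiber := @lift1_fiber R theta.
have lawPi_lift t : lawPi t =1 lift_dist theta (lawMu t).
  apply: mc_law_push => [x z | y]; first exact: (glauberK_intertwined lift_sum1 lift_fiber).
  by rewrite push_point_mass.
move=> t; split=> // x.
rewrite -[RHS](push_prod_kernelK lift_sum1 lift_fiber).
by apply: eq_big => [y // | y _]; exact: lawPi_lift.
Qed.
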